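(* Let $\mathcal P=\langle F,R\rangle$ be a program and $H$ a hypothesis. Then $T_R(F)$ and the support $s^H_{\mathcal P}$ are compatible.
   Context: Let $\langle \mathcal{B},\le_t,\le_k\rangle$ be a complete, infinitely distributive bilattice with negation satisfying the infinitary interlacing conditions; $\wedge,\vee$ are meet/join for $\le_t$, $\otimes,\oplus$ meet/join for $\le_k$, $\mathcal U$ is the bottom of $\le_k$. A closed formula is built from ground literals and elements of $\mathcal B$ using $\wedge,\vee,\otimes,\oplus,\exists,\forall$ (quantifiers over closed terms). A program $\mathcal P=\langle F,R\rangle$ consists of a function $F$ from the Herbrand base $\mathcal{HB}_{\mathcal P}$ to $\mathcal B$ and a finite set $R$ of ground clauses $A\leftarrow B$, each ground atom being the head of at most one clause; $Head(\mathcal P)$ is the set of heads. An interpretation (or hypothesis) is a function $I:\mathcal{HB}_{\mathcal P}\to\mathcal B$, extended to closed formulas homomorphically ($I(\neg A)=\neg I(A)$, $I(X\wedge Y)=I(X)\wedge I(Y)$ etc., $\exists$ as $\bigvee$, $\forall$ as $\bigwedge$ over closed instances). Operations on interpretations are pointwise. $I,J$ are compatible if $I(A)\neq\mathcal U$ and $J(A)\neq\mathcal U$ imply $I(A)=J(A)$ for all $A$. $I\le J$ means $I(A)\neq\mathcal U\Rightarrow I(A)=J(A)$ for all $A$. $I_{/S}$ is $I$ on $S$ and $\mathcal U$ elsewhere. $B\equiv_I\alpha$ means $J(B)=\alpha$ for all $J$ with $I\le J$. $T_R(I)(A)=\alpha$ if there is a clause $A\leftarrow B$ in $R$ with $B\equiv_I\alpha$,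 and $\mathcal U$ otherwise. $H'$ is sound w.r.t. $\mathcal P$ if $F,H'$ are compatible and $H'_{/Head(\mathcal P)}\le T_R(F\oplus H')$. The support $s^H_{\mathcal P}$ of $H$ is the maximal (w.r.t. $\le$) interpretation $H'\le H$ that is sound w.r.t. $\mathcal P$; it equals $\bigoplus\{H'\mid H'\le H,\ H' \text{ sound w.r.t. } \mathcal P\}$. *)

From Stdlib Require Import List Vector Fin ClassicalEpsilon.
Import ListNotations.
Set Implicit Arguments.

Definition is_porder {A : Type} (le : A -> A -> Prop) : Prop :=
  (forall x, le x x) /\
  (forall x y, le x y -> le y x -> x = y) /\
  (forall x y z, le x y -> le y z -> le x z).

Definition is_big_inf {A : Type} (le : A -> A -> Prop)
  (inf : forall I : Type, (I -> A) -> A) : Prop :=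
  forall (I : Type) (f : I -> A),
    (forall i, le (inf I f) (f i)) /\
    (forall z, (forall i, le z (f i)) -> le z (inf I f)).

Definition is_big_sup {A : Type} (le : A -> A -> Prop)
  (sup : forall I : Type, (I -> A) -> A) : Prop :=
  forall (I : Type) (f : I -> A),
    (forall i, le (f i) (sup I f)) /\
    (forall z, (forall i, le (f i) z) -> le (sup I f) z).

Definition bin_of {A : Type} (big : forall I : Type, (I -> A) -> A) (x y : A) : A :=
  big bool (fun b => if b then x else y).

(* infinitary distributive law: x o (big_i y_i) = big_i (x o y_i), nonempty families *)
Definition inf_distr {A : Type} (bin : A -> A -> A)
  (big : forall I : Type, (I -> A) -> A) : Prop :=
  forall (I : Type) (i0 : I) (x : A) (f : I -> A),
    bin x (big I f) = big I (fun i => bin x (f i)).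

Definition inf_mono {A : Type} (le : A -> A -> Prop)
  (big : forall I : Type, (I -> A) -> A) : Prop :=
  forall (I : Type) (f g : I -> A), (forall i, le (f i) (g i)) -> le (big I f) (big I g).

Record Bilattice := {
  car :> Type;
  le_t : car -> car -> Prop;
  le_k : car -> car -> Prop;
  bigAnd : forall I : Type, (I -> car) -> car;
  bigOr : forall I : Type, (I -> car) -> car;
  bigOtimes : forall I : Type, (I -> car) -> car;
  bigOplus : forall I : Type, (I -> car) -> car;
  neg : car -> car;
  le_t_po : is_porder le_t;
  le_k_po : is_porder le_k;
  bigAnd_glb : is_big_inf le_t bigAnd;
  bigOr_lub : is_big_sup le_t bigOr;
  bigOtimes_glb : is_big_inf le_k bigOtimes;
  bigOplus_lub : is_big_sup le_k bigOplus;
  neg_t_anti : forall x y, le_t x y -> le_t (neg y) (neg x);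
  neg_k_mono : forall x y, le_k x y -> le_k (neg x) (neg y);
  neg_invol : forall x, neg (neg x) = x;
  d_and_or : inf_distr (bin_of bigAnd) bigOr;
  d_and_ot : inf_distr (bin_of bigAnd) bigOtimes;
  d_and_op : inf_distr (bin_of bigAnd) bigOplus;
  d_or_and : inf_distr (bin_of bigOr) bigAnd;
  d_or_ot : inf_distr (bin_of bigOr) bigOtimes;
  d_or_op : inf_distr (bin_of bigOr) bigOplus;
  d_ot_and : inf_distr (bin_of bigOtimes) bigAnd;
  d_ot_or : inf_distr (bin_of bigOtimes) bigOr;
  d_ot_op : inf_distr (bin_of bigOtimes) bigOplus;
  d_op_and : inf_distr (bin_of bigOplus) bigAnd;
  d_op_or : inf_distr (bin_of bigOplus) bigOr;
  d_op_ot : inf_distr (bin_of bigOplus) bigOtimes;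
  il_and : inf_mono le_k bigAnd;
  il_or : inf_mono le_k bigOr;
  il_ot : inf_mono le_t bigOtimes;
  il_op : inf_mono le_t bigOplus
}.

Section Logic.
Variable BL : Bilattice.

Definition bAnd : BL -> BL -> BL := bin_of (bigAnd BL).
Definition bOr : BL -> BL -> BL := bin_of (bigOr BL).
Definition bOtimes : BL -> BL -> BL := bin_of (bigOtimes BL).
Definition bOplus : BL -> BL -> BL := bin_of (bigOplus BL).
(* U = bottom of <=_k = join of the empty family *)
Definition Ubot : BL := @bigOplus BL False (fun e => match e with end).

End Logic.

Record Signature := {
  fsym : Type;  farity : fsym -> nat;
  psym : Type;  parity : psym -> nat
}.

Section Syntax.
Variable Sg : Signature.
Variable BL : Bilattice.

Inductive gterm : Type :=
  | GApp (f : fsym Sg) (args : Vector.t gterm (farity Sg f)).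

Inductive gatom : Type :=
  | GAtom (p : psym Sg) (args : Vector.t gterm (parity Sg p)).

(* terms with n (de Bruijn-indexed) free variables *)
Inductive term (n : nat) : Type :=
  | TVar (i : Fin.t n)
  | TApp (f : fsym Sg) (args : Vector.t (term n) (farity Sg f)).

Fixpoint tinst {n : nat} (env : Fin.t n -> gterm) (t : term n) : gterm :=
  match t with
  | TVar i => env i
  | TApp f v => GApp f (Vector.map (tinst env) v)
  end.

(* formulas with n free variables; closed formulas are [formula 0] *)
Inductive formula : nat -> Type :=
  | FConst {n} (b : car BL) : formula n
  | FPos {n} (p : psym Sg) (args : Vector.t (term n) (parity Sg p)) : formula n
  | FNeg {n} (p : psym Sg) (args : Vector.t (term n) (parity Sg p)) : formula n
  | FAnd {n} (x y : formula n) : formula n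
  | FOr {n} (x y : formula n) : formula n
  | FOtimes {n} (x y : formula n) : formula n
  | FOplus {n} (x y : formula n) : formula n
  | FExists {n} (x : formula (S n)) : formula n
  | FForall {n} (x : formula (S n)) : formula n.

Definition interp := gatom -> car BL.

Definition scons {n : nat} (t : gterm) (env : Fin.t n -> gterm) : Fin.t (S n) -> gterm :=
  fun i => Fin.caseS' i (fun _ => gterm) t env.

Fixpoint evalf (I : interp) {n : nat} (env : Fin.t n -> gterm) (x : formula n) : car BL :=
  match x in formula n return (Fin.t n -> gterm) -> car BL with
  | FConst b => fun _ => b
  | FPos p v => fun env => I (GAtom p (Vector.map (tinst env) v))
  | FNeg p v => fun env => neg BL (I (GAtom p (Vector.map (tinst env) v)))
  | FAnd x y => fun env => bAnd BL (evalf I env x) (evalf I env y)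
  | FOr x y => fun env => bOr BL (evalf I env x) (evalf I env y)
  | FOtimes x y => fun env => bOtimes BL (evalf I env x) (evalf I env y)
  | FOplus x y => fun env => bOplus BL (evalf I env x) (evalf I env y)
  | FExists x => fun env => @bigOr BL gterm (fun t => evalf I (scons t env) x)
  | FForall x => fun env => @bigAnd BL gterm (fun t => evalf I (scons t env) x)
  end env.

Definition env0 : Fin.t 0 -> gterm := fun i => Fin.case0 (fun _ => gterm) i.

Definition evalc (I : interp) (x : formula 0) : car BL := evalf I env0 x.

Record clause := { chead : gatom; cbody : formula 0 }.

Record program := {
  progF : interp;
  progR : list clause;   (* finite set of ground clauses *)
  progR_head_unique : forall c1 c2, List.In c1 progR -> List.In c2 progR ->
                        chead c1 = chead c2 -> c1 = c2
}.

Definition inHead (P : program) (A : gatom) : Prop :=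
  exists c, List.In c (progR P) /\ chead c = A.

Definition ioplus (I J : interp) : interp := fun A => bOplus BL (I A) (J A).

Definition compatible (I J : interp) : Prop :=
  forall A, I A <> Ubot BL -> J A <> Ubot BL -> I A = J A.

Definition ile (I J : interp) : Prop :=
  forall A, I A <> Ubot BL -> I A = J A.

Definition restrict (I : interp) (Sset : gatom -> Prop) : interp :=
  fun A => match excluded_middle_informative (Sset A) with
           | left _ => I A
           | right _ => Ubot BL
           end.

Definition equivI (I : interp) (B : formula 0) (a : car BL) : Prop :=
  forall J, ile I J -> evalc J B = a.

Definition TR_cond (R : list clause) (I : interp) (A : gatom) (a : car BL) : Prop :=
  exists c, List.In c R /\ chead c = A /\ equivI I (cbody c) a.

Definition TR (R : list clause) (I : interp) : interp :=
  fun A => match excluded_middle_informative (exists a, TR_cond R I A a) with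
           | left e => proj1_sig (constructive_indefinite_description _ e)
           | right _ => Ubot BL
           end.

Definition sound (P : program) (H' : interp) : Prop :=
  compatible (progF P) H' /\
  ile (restrict H' (inHead P)) (TR (progR P) (ioplus (progF P) H')).

Definition support (P : program) (H : interp) : interp :=
  fun A => @bigOplus BL {H' : interp | ile H' H /\ sound P H'}
                       (fun H' => proj1_sig H' A).

End Syntax.

(** The support only ever takes the values of [H] (every sound [H' <= H] agrees
    with [H] where it is defined), and wherever it is defined some sound
    [H' <= H] is defined too.  Soundness gives [H' A = T_R(F (+) H') A], and
    compatibility of [F] with [H'] makes [F <= F (+) H'], so monotonicity of
    [T_R] under [<=] yields [T_R(F) A = T_R(F (+) H') A = H' A]. *)
From Stdlib Require Import ClassicalEpsilon Classical.

Set Implicit Arguments.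

Section BilatticeFacts.
Context {BL : Bilattice}.

Lemma le_k_refl (x : BL) : le_k BL x x.
Proof. destruct (le_k_po BL) as [refl _]. apply refl. Qed.

Lemma le_k_antisym (x y : BL) : le_k BL x y -> le_k BL y x -> x = y.
Proof. destruct (le_k_po BL) as [_ [antisym _]]. apply antisym. Qed.

Lemma Ubot_le_k (x : BL) : le_k BL (Ubot BL) x.
Proof.
  destruct (@bigOplus_lub BL False (fun e => match e with end)) as [_ least].
  apply least. intros [].
Qed.

Lemma bigOplus_two_valued (I : Type) (f : I -> BL) (v : BL) :
  (forall i, f i = Ubot BL \/ f i = v) -> (exists i, f i = v) ->
  @bigOplus BL I f = v.
Proof.
  intros Hf [i0 Hi0]. destruct (@bigOplus_lub BL I f) as [upper least].
  apply le_k_antisym.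
  - apply least. intros i. destruct (Hf i) as [-> | ->].
    + apply Ubot_le_k.
    + apply le_k_refl.
  - rewrite <- Hi0. apply upper.
Qed.

Lemma bigOplus_Ubot (I : Type) (f : I -> BL) :
  (forall i, f i = Ubot BL) -> @bigOplus BL I f = Ubot BL.
Proof.
  intros Hf. destruct (@bigOplus_lub BL I f) as [_ least].
  apply le_k_antisym.
  - apply least. intros i. rewrite Hf. apply le_k_refl.
  - apply Ubot_le_k.
Qed.

Lemma bigOplus_neq_Ubot {I : Type} {f : I -> BL} :
  @bigOplus BL I f <> Ubot BL -> exists i, f i <> Ubot BL.
Proof.
  intros Hsup. apply NNPP. intros Hall. apply Hsup, bigOplus_Ubot.
  intros i. apply NNPP. intros Hi. apply Hall. exists i. exact Hi.
Qed.

Lemma bOplus_absorb (x y : BL) : y = Ubot BL \/ y = x -> bOplus BL x y = x.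
Proof.
  intros Hy. apply bigOplus_two_valued.
  - intros [|]; [right; reflexivity | exact Hy].
  - exists true. reflexivity.
Qed.

End BilatticeFacts.

Section Programs.
Context {BL : Bilattice} {Sg : Signature}.
Variable P : program Sg BL.

Lemma ile_refl (I : interp Sg BL) : ile I I.
Proof. intros A _. reflexivity. Qed.

Lemma ile_trans (I J K : interp Sg BL) : ile I J -> ile J K -> ile I K.
Proof.
  intros HIJ HJK A HA. rewrite (HIJ A HA). apply HJK. rewrite <- (HIJ A HA). exact HA.
Qed.

Lemma ile_ioplus (I J : interp Sg BL) : compatible I J -> ile I (ioplus I J).
Proof.
  intros Hcomp A HA. symmetry. apply bOplus_absorb.
  destruct (classic (J A = Ubot BL)) as [HJ | HJ].
  - left. exact HJ.
  - right. symmetry. exact (Hcomp A HA HJ).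
Qed.

Lemma restrict_in (I : interp Sg BL) {S : gatom Sg -> Prop} {A : gatom Sg} :
  S A -> restrict I S A = I A.
Proof.
  intros HA. unfold restrict.
  destruct (excluded_middle_informative (S A)); [reflexivity | contradiction].
Qed.

Lemma equivI_ile (I J : interp Sg BL) (B : formula Sg BL 0) (a : BL) :
  ile I J -> equivI I B a -> equivI J B a.
Proof. intros HIJ HB K HJK. apply HB, (ile_trans HIJ HJK). Qed.

Lemma TR_cond_TR {R : list (clause Sg BL)} {I : interp Sg BL} {A : gatom Sg} :
  TR R I A <> Ubot BL -> TR_cond R I A (TR R I A).
Proof.
  unfold TR. destruct (excluded_middle_informative _) as [e | _].
  - exact (fun _ => proj2_sig (constructive_indefinite_description _ e)).
  - intros HU. contradiction HU. reflexivity.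
Qed.

Lemma TR_eq (I : interp Sg BL) (A : gatom Sg) (a : BL) :
  TR_cond (progR P) I A a -> TR (progR P) I A = a.
Proof.
  intros [c [Hc [Hhead Hbody]]]. unfold TR.
  destruct (excluded_middle_informative _) as [e | Hno].
  - destruct (constructive_indefinite_description _ e) as [a' [c' [Hc' [Hhead' Hbody']]]].
    simpl. assert (c' = c) as -> by (apply (progR_head_unique P); congruence).
    rewrite <- (Hbody' I (ile_refl I)). apply (Hbody I (ile_refl I)).
  - contradiction Hno. exists a, c. auto.
Qed.

Lemma TR_mono (I J : interp Sg BL) :
  ile I J -> ile (TR (progR P) I) (TR (progR P) J).
Proof.
  intros HIJ A HA. symmetry. apply TR_eq.
  destruct (TR_cond_TR HA) as [c [Hc [Hhead Hbody]]].
  exists c. split; [exact Hc | split; [exact Hhead | exact (equivI_ile HIJ Hbody)]].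
Qed.

Lemma TR_inHead {I : interp Sg BL} {A : gatom Sg} :
  TR (progR P) I A <> Ubot BL -> inHead P A.
Proof. intros HA. destruct (TR_cond_TR HA) as [c [Hc [Hhead _]]]. exists c. auto. Qed.

Lemma sound_TR {H' : interp Sg BL} {A : gatom Sg} :
  sound P H' -> H' A <> Ubot BL -> TR (progR P) (progF P) A <> Ubot BL ->
  H' A = TR (progR P) (progF P) A.
Proof.
  intros [Hcomp Hsound] HA HT.
  assert (Hrestr : restrict H' (inHead P) A = H' A) by exact (restrict_in H' (TR_inHead HT)).
  rewrite (TR_mono (ile_ioplus Hcomp) A HT), <- Hrestr.
  apply Hsound. rewrite Hrestr. exact HA.
Qed.

Lemma support_witness {H : interp Sg BL} {A : gatom Sg} :
  support P H A <> Ubot BL ->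
  exists H', ile H' H /\ sound P H' /\ H' A <> Ubot BL.
Proof.
  intros HS. destruct (bigOplus_neq_Ubot HS) as [[H' [HH' Hsound]] HA].
  exists H'. auto.
Qed.

Lemma support_ile (H : interp Sg BL) : ile (support P H) H.
Proof.
  intros A HS. destruct (bigOplus_neq_Ubot HS) as [[H' [HH' Hsound]] HA].
  apply bigOplus_two_valued.
  - intros [K HK]. simpl. destruct HK as [HK _].
    destruct (classic (K A = Ubot BL)) as [HU | HU]; [left | right]; auto.
  - exists (exist _ H' (conj HH' Hsound)). exact (HH' A HA).
Qed.

End Programs.

Theorem mainTheorem3 (BL : Bilattice) (Sg : Signature) (P : program Sg BL)
  (H : interp Sg BL) :
  compatible (TR (progR P) (progF P)) (support P H).
Proof.
  intros A HT HS.
  destruct (support_witness P HS) as [H' [HH' [Hsound HA]]].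
  rewrite (support_ile P H A HS), <- (HH' A HA).
  symmetry. exact (sound_TR Hsound HA HT).
Qed.
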